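(* Let $r\ge 3$ and let $F(x,y)=(f(x,y),x,y)$ be a germ at $o=(0,0)$ of a $C^r$ map into $\mathbf{R}^3_1$ with $f(0,0)=0$, $f_x(0,0)=0$, $f_y(0,0)=1$, such that $\{B_F\neq0\}$ is open and dense in the domain and $A_F-\varphi B_F^2\equiv0$ for some $C^{r-2}$ function germ $\varphi$ at $o$. Suppose that $o$ is a non-degenerate light-like point, i.e. $\nabla B_F(o)\neq(0,0)$. Then the Gaussian curvature $K=-C_F/B_F^2$ of $F$ diverges to $+\infty$ at $o$, i.e. $K(p)\to+\infty$ as $p\to o$ with $B_F(p)\neq0$.
   Context: $\mathbf{R}^3_1$ is Lorentz–Minkowski 3-space with coordinates $(t,x,y)$ and inner product $-dt^2+dx^2+dy^2$. $B_F:=1-f_x^2-f_y^2$, $A_F:=(1-f_x^2)f_{yy}+2f_xf_yf_{xy}+(1-f_y^2)f_{xx}$, $C_F:=f_{xx}f_{yy}-f_{xy}^2$; the Gaussian curvature of $F$ at points where $B_F\ne0$ is $K=-C_F/B_F^2$. *)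

From Stdlib Require Import Reals.
From Coquelicot Require Import Coquelicot.
Open Scope R_scope.

Definition dx (g : R -> R -> R) : R -> R -> R :=
  fun x y => Derive (fun t => g t y) x.
Definition dy (g : R -> R -> R) : R -> R -> R :=
  fun x y => Derive (fun t => g x t) y.

Definition continuous2 (g : R -> R -> R) (x y : R) : Prop :=
  filterlim (fun p : R * R => g (fst p) (snd p)) (locally (x, y)) (locally (g x y)).

Fixpoint Ck (k : nat) (U : R -> R -> Prop) (g : R -> R -> R) : Prop :=
  match k with
  | O => forall x y, U x y -> continuous2 g x y
  | S k' =>
      (forall x y, U x y ->
         ex_derive (fun t => g t y) x /\ ex_derive (fun t => g x t) y)
      /\ (forall x y, U x y -> continuous2 g x y)
      /\ Ck k' U (dx g) /\ Ck k' U (dy g)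
  end.

Definition open2 (U : R -> R -> Prop) : Prop :=
  forall x y, U x y -> exists eps, 0 < eps /\
    forall x' y', Rabs (x' - x) < eps -> Rabs (y' - y) < eps -> U x' y'.

(* B_F, A_F, C_F for F(x,y) = (f(x,y), x, y). *)
Definition B_F (f : R -> R -> R) : R -> R -> R :=
  fun x y => 1 - (dx f x y)^2 - (dy f x y)^2.
Definition A_F (f : R -> R -> R) : R -> R -> R :=
  fun x y => (1 - (dx f x y)^2) * dy (dy f) x y
             + 2 * dx f x y * dy f x y * dy (dx f) x y
             + (1 - (dy f x y)^2) * dx (dx f) x y.
Definition C_F (f : R -> R -> R) : R -> R -> R :=
  fun x y => dx (dx f) x y * dy (dy f) x y - (dy (dx f) x y)^2.
(* Gaussian curvature (meaningful where B_F <> 0). *)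
Definition K_F (f : R -> R -> R) : R -> R -> R :=
  fun x y => - C_F f x y / (B_F f x y)^2.

From Stdlib Require Import Reals Lra Lia Psatz.
From Coquelicot Require Import Coquelicot.
Open Scope R_scope.

(* At [o] we have [f_x = 0] and [f_y = 1], so [B_F(o) = 0] and [A_F(o) = f_yy(o)];
   the relation [A_F = phi B_F^2] thus forces [f_yy(o) = 0].  Then
   [grad B_F(o) = -2 (f_xy(o), f_yy(o)) = -2 (f_xy(o), 0)], so non-degeneracy means
   [f_xy(o) <> 0] and [C_F(o) = -f_xy(o)^2 < 0].  Since [C_F] is continuous and
   [B_F] is continuous and vanishes at [o], [K = -C_F / B_F^2] tends to [+oo]. *)

Lemma Ck_le (k n : nat) (U : R -> R -> Prop) (g : R -> R -> R) :
  (k <= n)%nat -> Ck n U g -> Ck k U g.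
Proof.
  revert k g; induction n as [|n IHn]; intros k g Hkn Hg.
  - now replace k with O by lia.
  - destruct k as [|k]; destruct Hg as (Hder & Hcont & Hgx & Hgy); [exact Hcont|].
    refine (conj Hder (conj Hcont (conj _ _))); apply IHn; auto; lia.
Qed.

Lemma Ck_continuity_2d_pt (k : nat) (U : R -> R -> Prop) (g : R -> R -> R) x y :
  Ck k U g -> U x y -> continuity_2d_pt g x y.
Proof.
  intros Hg Hxy; apply continuity_2d_pt_filterlim.
  destruct k; [exact (Hg x y Hxy)|exact (proj1 (proj2 Hg) x y Hxy)].
Qed.

Lemma continuity_2d_pt_sqr (g : R -> R -> R) x y :
  continuity_2d_pt g x y -> continuity_2d_pt (fun u v => (g u v)^2) x y.
Proof.
  intros Hg; apply continuity_2d_pt_ext with (fun u v => g u v * g u v).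
  - intros; ring.
  - now apply continuity_2d_pt_mult.
Qed.

Lemma Derive_one_minus_sqr_minus_sqr (g h : R -> R) t :
  ex_derive g t -> ex_derive h t ->
  Derive (fun s => 1 - (g s)^2 - (h s)^2) t
  = -2 * (g t * Derive g t + h t * Derive h t).
Proof.
  intros Hg Hh; apply is_derive_unique; auto_derive; [tauto|].
  change (fun s => g s) with g; change (fun s => h s) with h; ring.
Qed.

Lemma opp_div_sqr_unbounded (b c : R -> R -> R) x0 y0 :
  continuity_2d_pt b x0 y0 -> continuity_2d_pt c x0 y0 ->
  b x0 y0 = 0 -> c x0 y0 < 0 ->
  forall M, exists delta, 0 < delta /\
    forall x y, Rabs (x - x0) < delta -> Rabs (y - y0) < delta -> b x y <> 0 ->
      M < - c x y / (b x y)^2.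
Proof.
  intros Hb Hc Hb0 Hc0 M.
  set (N := Rabs M + 1).
  assert (HN : M < N /\ 0 < N).
  { pose proof (Rle_abs M); pose proof (Rabs_pos M); unfold N; split; lra. }
  set (k := - c x0 y0 / (2 * N)).
  assert (Hk : 0 < k) by (apply Rdiv_lt_0_compat; lra).
  destruct (Hc (mkposreal (- c x0 y0 / 2) ltac:(lra))) as [dc Hdc].
  destruct (Hb (mkposreal (Rmin 1 k) ltac:(apply Rmin_glb_lt; lra))) as [db Hdb].
  exists (Rmin dc db); split; [apply Rmin_glb_lt; apply cond_pos|].
  intros x y Hx Hy Hbxy.
  assert (Hcxy : c x y < c x0 y0 / 2).
  { assert (H := Hdc x y (Rlt_le_trans _ _ _ Hx (Rmin_l _ _))
                         (Rlt_le_trans _ _ _ Hy (Rmin_l _ _))).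
    apply Rabs_def2 in H; simpl in H; lra. }
  assert (Hbsmall : Rabs (b x y) < Rmin 1 k).
  { assert (H := Hdb x y (Rlt_le_trans _ _ _ Hx (Rmin_r _ _))
                         (Rlt_le_trans _ _ _ Hy (Rmin_r _ _))).
    simpl in H; now rewrite Hb0, Rminus_0_r in H. }
  assert (Hb2pos : 0 < (b x y)^2) by (apply pow2_gt_0 in Hbxy; lra).
  (* [|b| < 1] gives [b^2 <= |b| < k], and [-c > k N] by the choice of [k]. *)
  assert (Hb2 : (b x y)^2 < k).
  { pose proof (Rmin_l 1 k); pose proof (Rmin_r 1 k); pose proof (Rabs_pos (b x y)).
    rewrite <- Rsqr_pow2, Rsqr_abs; unfold Rsqr; nra. }
  assert (HkN : k * N = - c x0 y0 / 2) by (unfold k; field; lra).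
  apply Rlt_trans with N; [lra|].
  apply Rmult_lt_reg_r with ((b x y)^2); [exact Hb2pos|].
  unfold Rdiv; rewrite Rmult_assoc, Rinv_l, Rmult_1_r by lra.
  nra.
Qed.

Section SecondOrder.

Variables (U : R -> R -> Prop) (f : R -> R -> R).
Hypotheses (HU : open2 U) (Hf : Ck 2 U f).

Lemma dx_dy_comm x y : U x y -> dx (dy f) x y = dy (dx f) x y.
Proof.
  intros Hxy.
  destruct Hf as (Hfder & _ & (Hfxder & _ & _ & Hfxy) & (Hfyder & _ & Hfyx & _)).
  destruct (HU x y Hxy) as [e [He Hbox]].
  apply Schwarz.
  - exists (mkposreal e He); intros u v Hu Hv.
    specialize (Hbox u v Hu Hv).
    repeat split; try apply (Hfder u v Hbox).
    + apply (Hfyder u v Hbox).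
    + apply (Hfxder u v Hbox).
  - exact (Ck_continuity_2d_pt 0 U _ x y Hfyx Hxy).
  - exact (Ck_continuity_2d_pt 0 U _ x y Hfxy Hxy).
Qed.

Lemma dx_B_F x y : U x y ->
  dx (B_F f) x y = -2 * (dx f x y * dx (dx f) x y + dy f x y * dx (dy f) x y).
Proof.
  intros Hxy; destruct Hf as (_ & _ & (Hfxder & _) & (Hfyder & _)).
  apply (Derive_one_minus_sqr_minus_sqr (fun t => dx f t y) (fun t => dy f t y)).
  - apply (Hfxder x y Hxy).
  - apply (Hfyder x y Hxy).
Qed.

Lemma dy_B_F x y : U x y ->
  dy (B_F f) x y = -2 * (dx f x y * dy (dx f) x y + dy f x y * dy (dy f) x y).
Proof.
  intros Hxy; destruct Hf as (_ & _ & (Hfxder & _) & (Hfyder & _)).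
  apply (Derive_one_minus_sqr_minus_sqr (fun t => dx f x t) (fun t => dy f x t)).
  - apply (Hfxder x y Hxy).
  - apply (Hfyder x y Hxy).
Qed.

Lemma continuity_2d_pt_B_F x y : U x y -> continuity_2d_pt (B_F f) x y.
Proof.
  intros Hxy; destruct Hf as (_ & _ & Hfx & Hfy).
  apply continuity_2d_pt_minus; [apply continuity_2d_pt_minus|].
  - apply continuity_2d_pt_const.
  - apply continuity_2d_pt_sqr, (Ck_continuity_2d_pt 1 U _ x y Hfx Hxy).
  - apply continuity_2d_pt_sqr, (Ck_continuity_2d_pt 1 U _ x y Hfy Hxy).
Qed.

Lemma continuity_2d_pt_C_F x y : U x y -> continuity_2d_pt (C_F f) x y.
Proof.
  intros Hxy; destruct Hf as (_ & _ & (_ & _ & Hfxx & Hfxy) & (_ & _ & _ & Hfyy)).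
  apply continuity_2d_pt_minus; [apply continuity_2d_pt_mult|apply continuity_2d_pt_sqr].
  - exact (Ck_continuity_2d_pt 0 U _ x y Hfxx Hxy).
  - exact (Ck_continuity_2d_pt 0 U _ x y Hfyy Hxy).
  - exact (Ck_continuity_2d_pt 0 U _ x y Hfxy Hxy).
Qed.

Lemma C_F_neg_at_nondegenerate_light_like x y :
  U x y -> dx f x y = 0 -> dy f x y = 1 -> A_F f x y = 0 ->
  (dx (B_F f) x y <> 0 \/ dy (B_F f) x y <> 0) -> C_F f x y < 0.
Proof.
  intros Hxy Hfx Hfy HA HB.
  assert (Hfyy : dy (dy f) x y = 0).
  { unfold A_F in HA; rewrite Hfx, Hfy in HA; lra. }
  assert (Hfxy : dy (dx f) x y <> 0).
  { rewrite dx_B_F, dy_B_F, dx_dy_comm, Hfx, Hfy, Hfyy in HB by exact Hxy.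
    intros E; rewrite E in HB; lra. }
  unfold C_F; rewrite Hfyy.
  apply pow2_gt_0 in Hfxy; lra.
Qed.

End SecondOrder.

Theorem proposition3p8 (r : nat) (U : R -> R -> Prop) (f phi : R -> R -> R) :
  (3 <= r)%nat ->
  open2 U -> U 0 0 ->
  Ck r U f ->
  f 0 0 = 0 -> dx f 0 0 = 0 -> dy f 0 0 = 1 ->
  (forall x y, U x y -> forall eps, 0 < eps ->
     exists x' y', U x' y' /\ Rabs (x' - x) < eps /\ Rabs (y' - y) < eps
                   /\ B_F f x' y' <> 0) ->
  Ck (r - 2) U phi ->
  (forall x y, U x y -> A_F f x y - phi x y * (B_F f x y)^2 = 0) ->
  (dx (B_F f) 0 0 <> 0 \/ dy (B_F f) 0 0 <> 0) ->
  forall M : R, exists delta, 0 < delta /\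
    forall x y, U x y -> Rabs x < delta -> Rabs y < delta -> B_F f x y <> 0 ->
      M < K_F f x y.
Proof.
  intros Hr HU Ho Hf _ Hfx Hfy _ _ HA HB M.
  apply (Ck_le 2) in Hf; [|lia].
  assert (HBo : B_F f 0 0 = 0) by (unfold B_F; rewrite Hfx, Hfy; ring).
  assert (HAo : A_F f 0 0 = 0) by (specialize (HA 0 0 Ho); rewrite HBo in HA; lra).
  destruct (opp_div_sqr_unbounded (B_F f) (C_F f) 0 0
              (continuity_2d_pt_B_F U f Hf 0 0 Ho)
              (continuity_2d_pt_C_F U f Hf 0 0 Ho) HBo
              (C_F_neg_at_nondegenerate_light_like U f HU Hf 0 0 Ho Hfx Hfy HAo HB) M)
    as [delta [Hdelta Hbound]].
  exists delta; split; [exact Hdelta|].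
  intros x y _ Hx Hy Hb; unfold K_F.
  apply Hbound; rewrite ?Rminus_0_r; assumption.
Qed.
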